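(* Let $\Gamma$ be a finite vertex-transitive graph and suppose $S$ is a $k$-extended irregular dominating set of $\Gamma$. Then $S$ is optimal and $k=\gamma_e(\Gamma)=\mathrm{diam}(\Gamma)+1$. Moreover, the labels of the $k$ vertices of $S$ are exactly all the elements of $\{0,1,\dots,\mathrm{diam}(\Gamma)\}$.
   Context: Let $\Gamma=(V,E)$ be a finite simple undirected graph with graph distance $d$; $\mathrm{diam}(\Gamma)$ is the largest distance between two vertices. A vertex $v$ carrying a non-negative integer label $\ell$ dominates (covers) exactly the vertices $u$ with $d(u,v)=\ell$; a vertex labeled $0$ dominates only itself. For $k\ge0$, a $k$-extended irregular dominating set is a set $S\subseteq V$ of $k$ vertices together with a labeling $\lambda:S\to\mathbb{Z}_{\ge 0}$ with distinct labels on distinct vertices, such that every vertex of $V$ is dominated by at least one vertex of $S$; it is assumed that some vertex of $S$ has label $0$. The extended irregular domination number $\gamma_e(\Gamma)$ is the minimum cardinality of an extended irregular dominating set of $\Gamma$; a $k$-extended irregular dominating set is optimal if $k=\gamma_e(\Gamma)$. *)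

From mathcomp Require Import all_boot.
From mathcomp Require Import fingroup perm.

Set Implicit Arguments.
Unset Strict Implicit.
Unset Printing Implicit Defensive.

Section Graph.
Variable T : finType.

Definition simple_graph (e : rel T) : Prop := symmetric e /\ irreflexive e.

Definition walkb (e : rel T) (x y : T) (n : nat) : bool :=
  [exists p : n.-tuple T, path e x p && (last x p == y)].

(* graph distance: least n admitting a walk of length n from x to y
   (searching n < #|T|; returns #|T| if y is unreachable, which never
   happens in a connected graph) *)
Definition gdist (e : rel T) (x y : T) : nat :=
  find (walkb e x y) (iota 0 #|T|).

Definition connected_graph (e : rel T) : Prop := forall x y, connect e x y.

Definition diam (e : rel T) : nat := \max_(x : T) \max_(y : T) gdist e x y.

Definition vertex_transitive (e : rel T) : Prop :=
  forall x y : T, exists f : {perm T},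
    (forall u v, e (f u) (f v) = e u v) /\ f x = y.

Definition dominates (e : rel T) (lab : T -> nat) (v u : T) : bool :=
  gdist e u v == lab v.

Definition ext_irr_dom (e : rel T) (S : {set T}) (lab : T -> nat) : Prop :=
  {in S &, injective lab} /\
  (forall u : T, exists2 v, v \in S & dominates e lab v u) /\
  (exists2 v, v \in S & lab v = 0).

Definition k_ext_irr_dom (e : rel T) (k : nat) (S : {set T}) (lab : T -> nat)
  : Prop := ext_irr_dom e S lab /\ #|S| = k.

Definition is_gamma_e (e : rel T) (g : nat) : Prop :=
  (exists (S : {set T}) (lab : T -> nat), k_ext_irr_dom e g S lab) /\
  (forall (S : {set T}) (lab : T -> nat), ext_irr_dom e S lab -> g <= #|S|).

End Graph.

(* In a vertex-transitive graph the sphere sizes n_l = #|{u | d(u, x) = l}| do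
   not depend on x, and n_l > 0 for every l <= diam (cut a diametral geodesic
   at the right place).  A dominating set S covers every vertex, so
   #|V| <= sum_(v in S) n_(lab v), while #|V| = sum_(l <= diam) n_l.  Labels
   beyond diam dominate nothing, and distinct labels are used at most once, so
   the labels in S must run through all of 0..diam; hence every extended
   irregular dominating set has at least diam + 1 vertices, exactly
   diam + 1 when all its labels are at most diam. *)
From mathcomp Require Import all_boot.
From mathcomp Require Import fingroup perm.

Set Implicit Arguments.
Unset Strict Implicit.
Unset Printing Implicit Defensive.

Lemma setT_of_sum_pos (I : finType) (n : I -> nat) (A : {set I}) :
  (forall i, 0 < n i) -> \sum_i n i <= \sum_(i in A) n i -> A = setT.
Proof.
move=> n_gt0; rewrite (bigID (mem A)) /= -[X in _ <= X]addn0 leq_add2l leqn0.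
rewrite sum_nat_eq0 => /forall_inP outA0; apply/setP => i; rewrite inE.
by apply/negPn/negP => /outA0; rewrite eqn0Ngt n_gt0.
Qed.

Section Walks.
Variables (T : finType) (e : rel T).

Lemma walkP x y n :
  reflect (exists p : seq T, [/\ size p = n, path e x p & last x p = y])
          (walkb e x y n).
Proof.
apply: (iffP existsP) => [[p /andP[pathp /eqP lastp]]|[p [sizep pathp lastp]]].
  by exists (tval p); rewrite size_tuple.
have sizep' : size p == n by rewrite sizep.
by exists (Tuple sizep'); rewrite /= pathp lastp eqxx.
Qed.

Lemma walkb_cat x y z m n :
  walkb e x y m -> walkb e y z n -> walkb e x z (m + n).
Proof.
move=> /walkP[p [<- pathp lastp]] /walkP[q [<- pathq lastq]]; apply/walkP.
by exists (p ++ q); rewrite size_cat cat_path last_cat lastp pathp pathq lastq.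
Qed.

Lemma walkb_split x y m n :
  walkb e x y (m + n) -> exists w, walkb e x w m /\ walkb e w y n.
Proof.
move=> /walkP[p [sizep pathp lastp]].
move: pathp lastp; rewrite -(cat_take_drop m p) cat_path last_cat.
move=> /andP[pathl pathr] lastr.
exists (last x (take m p)); split; apply/walkP.
  by exists (take m p); rewrite size_takel // sizep leq_addr.
by exists (drop m p); rewrite size_drop sizep addKn.
Qed.

Lemma walkb_perm (f : {perm T}) x y n :
  (forall u v, e (f u) (f v) = e u v) -> walkb e x y n -> walkb e (f x) (f y) n.
Proof.
move=> f_hom /walkP[p [sizep pathp lastp]]; apply/walkP; exists (map f p).
rewrite size_map path_map last_map lastp; split => //.
by rewrite (eq_path (e' := e)) // => u v; rewrite /= f_hom.
Qed.

Lemma gdist_le_walkb x y n : walkb e x y n -> gdist e x y <= n.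
Proof.
move=> walk_n; have [n_small|] := ltnP n #|T|; last first.
  by apply: leq_trans; rewrite -[X in _ <= X](size_iota 0) find_size.
rewrite leqNgt; apply/negP => /(before_find 0).
by rewrite nth_iota // add0n walk_n.
Qed.

Lemma walkb_gdist x y : connect e x y -> walkb e x y (gdist e x y).
Proof.
move=> /connectP[p pathp ->]; case: (shortenP pathp) => q pathq uniqq _.
have walk_q : walkb e x (last x q) (size q) by apply/walkP; exists q.
have short_q : size q < #|T|.
  by have := max_card (mem (x :: q)); rewrite (card_uniqP uniqq).
have has_walk : has (walkb e x (last x q)) (iota 0 #|T|).
  by apply/hasP; exists (size q); rewrite ?mem_iota.
have := nth_find 0 has_walk; rewrite nth_iota ?add0n //.
by rewrite -[X in _ < X](size_iota 0) -has_find.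
Qed.

Lemma gdist_perm (f : {perm T}) x y :
  (forall u v, e (f u) (f v) = e u v) -> gdist e (f x) (f y) = gdist e x y.
Proof.
move=> f_hom; apply: eq_find => n; apply/idP/idP; last exact: walkb_perm.
have finv_hom u v : e ((f^-1)%g u) ((f^-1)%g v) = e u v.
  by rewrite -f_hom !permKV.
by move=> /(walkb_perm finv_hom); rewrite !permK.
Qed.

Lemma gdist_le_diam x y : gdist e x y <= diam e.
Proof.
apply: leq_trans (leq_bigmax x).
exact: (leq_bigmax (F := fun y => gdist e x y) y).
Qed.

Lemma exists_gdist_diam (x0 : T) : exists x y, gdist e x y = diam e.
Proof.
have T_gt0 : 0 < #|T| by apply/card_gt0P; exists x0.
have [x Dx] := eq_bigmax (fun x => \max_y gdist e x y) T_gt0.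
have [y Dy] := eq_bigmax (fun y => gdist e x y) T_gt0.
by exists x, y; rewrite /diam Dx Dy.
Qed.

End Walks.

Section Spheres.
Variables (T : finType) (e : rel T).
Local Notation D := (diam e).

Definition sphere (x : T) (l : nat) : {set T} := [set u | gdist e u x == l].

Definition dominating (S : {set T}) (lab : T -> nat) : Prop :=
  forall u, exists2 v, v \in S & dominates e lab v u.

Lemma sum_card_sphere x : \sum_(l < D.+1) #|sphere x l| = #|T|.
Proof.
rewrite -sum1_card.
rewrite (partition_big (fun u => inord (gdist e u x) : 'I_D.+1) predT) //=.
apply: eq_bigr => l _; rewrite sum1_card; apply: eq_card => u.
by rewrite !inE -topredE /= inordK // ltnS gdist_le_diam.
Qed.

Lemma card_le_sum_sphere S lab :
  dominating S lab -> #|T| <= \sum_(v in S) #|sphere v (lab v)|.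
Proof.
move=> domS; rewrite -sum1_card.
under [X in _ <= X]eq_bigr => v _ do rewrite -sum1_card big_mkcond /=.
rewrite exchange_big /=; apply: leq_sum => u _.
have [v Sv /eqP uv] := domS u.
by rewrite (bigD1 v) //= inE uv eqxx addnC leq_addl.
Qed.

Lemma dominating_restrict_diam S lab :
  dominating S lab -> dominating [set v in S | lab v <= D] lab.
Proof.
move=> domS u; have [v Sv /eqP uv] := domS u.
by exists v; rewrite ?inE ?Sv -?uv ?gdist_le_diam //; apply/eqP.
Qed.

Hypothesis connected : connected_graph e.
Hypothesis transitive : vertex_transitive e.

Lemma card_sphere_transitive x y l : #|sphere x l| = #|sphere y l|.
Proof.
have [f [f_hom fx]] := transitive x y.
rewrite -(card_imset _ (@perm_inj _ f)); apply: eq_card => u.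
apply/imsetP/idP => [[w]|].
  by rewrite !inE -fx => wl ->; rewrite gdist_perm.
rewrite inE => ul; exists ((f^-1)%g u); last by rewrite permKV.
by rewrite inE -(gdist_perm _ _ f_hom) permKV fx.
Qed.

(* Walking l steps back from the end of a diametral geodesic lands at
   distance exactly l from its endpoint. *)
Lemma card_sphere_gt0 x l : l <= D -> 0 < #|sphere x l|.
Proof.
move=> lD; have [a [b abD]] := exists_gdist_diam e x.
rewrite (card_sphere_transitive x b); apply/card_gt0P.
have := walkb_gdist (connected a b); rewrite abD -(subnK lD).
move=> /walkb_split[w [aw wb]]; exists w.
rewrite inE eqn_leq gdist_le_walkb //=.
have := walkb_cat aw (walkb_gdist (connected w b)).
by move=> /gdist_le_walkb; rewrite abD -{1}(subnK lD) leq_add2l.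
Qed.

Section BoundedLabels.
Variables (S : {set T}) (lab : T -> nat).
Hypothesis lab_inj : {in S &, injective lab}.
Hypothesis lab_le_diam : forall v, v \in S -> lab v <= D.
Hypothesis domS : dominating S lab.

Let labo v : 'I_D.+1 := inord (lab v).

Let labo_val v : v \in S -> labo v = lab v :> nat.
Proof. by move=> Sv; rewrite inordK // ltnS lab_le_diam. Qed.

Let labo_inj : {in S &, injective labo}.
Proof.
move=> u v Su Sv /(congr1 (@nat_of_ord _)).
by rewrite !labo_val // => /lab_inj; apply.
Qed.

(* Any vertex [x0] can serve as the centre of the spheres; its existence
   matters, since for the empty graph S = set0 while D = 0. *)
Lemma dominating_labels_onto (x0 : T) : labo @: S = setT.
Proof.
apply: (setT_of_sum_pos (n := fun l : 'I_D.+1 => #|sphere x0 l|)).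
  by move=> l; apply: card_sphere_gt0; rewrite -ltnS.
rewrite sum_card_sphere big_imset //=.
apply: leq_trans (card_le_sum_sphere domS) (eq_leq _).
by apply: eq_bigr => v Sv; rewrite labo_val // (card_sphere_transitive v x0).
Qed.

Lemma card_dominating_bounded (x0 : T) : #|S| = D.+1.
Proof.
rewrite -(card_in_imset labo_inj) (dominating_labels_onto x0).
by rewrite cardsT card_ord.
Qed.

Lemma dominating_labels_range (x0 : T) l :
  l <= D -> exists2 v, v \in S & lab v = l.
Proof.
move=> lD; have : inord l \in labo @: S.
  by rewrite (dominating_labels_onto x0) inE.
case/imsetP => v Sv /(congr1 (@nat_of_ord _)).
by rewrite labo_val // inordK //; exists v.
Qed.

End BoundedLabels.

Lemma diam_lt_card_dominating (x0 : T) (S : {set T}) (lab : T -> nat) :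
  {in S &, injective lab} -> dominating S lab -> D < #|S|.
Proof.
move=> lab_inj domS; set S' := [set v in S | lab v <= D].
have S'S : S' \subset S by apply/subsetP => v; rewrite inE => /andP[].
have lab_inj' : {in S' &, injective lab}.
  by move=> u v /(subsetP S'S) Su /(subsetP S'S) Sv; apply: lab_inj.
have lab_le_diam' v : v \in S' -> lab v <= D by rewrite inE => /andP[].
rewrite -ltnS -(card_dominating_bounded lab_inj' lab_le_diam' _ x0).
  by rewrite ltnS subset_leq_card.
exact: dominating_restrict_diam.
Qed.

End Spheres.

Theorem corollary2p6 (T : finType) (e : rel T) (k : nat)
    (S : {set T}) (lab : T -> nat) :
  simple_graph e -> connected_graph e -> vertex_transitive e ->
  k_ext_irr_dom e k S lab ->
  (forall v, v \in S -> lab v <= diam e) ->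
  [/\ is_gamma_e e k,
      k = (diam e).+1,
      (forall v, v \in S -> lab v <= diam e) &
      (forall l, l <= diam e -> exists2 v, v \in S & lab v = l)].
Proof.
move=> _ connected transitive kS lab_le_diam.
have [[lab_inj [domS [x0 _ _]]] cardS] := kS.
have k_diam : k = (diam e).+1.
  by rewrite -cardS (card_dominating_bounded connected transitive _ _ domS x0).
have labels_range :=
  dominating_labels_range connected transitive lab_inj lab_le_diam domS x0.
split=> //; split=> [|S' lab' [lab'_inj [domS' _]]]; first by exists S, lab.
by rewrite k_diam (diam_lt_card_dominating connected transitive x0 lab'_inj).
Qed.
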